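(* Let $C$ be a cone in $\mathbb{R}^n$. Assume $X$ and $Y$ are nonempty closed decomposably $C$-antichain-convex subsets of $\mathbb{R}^n$, $Y$ is bounded and $X\cap Y=\emptyset$. (1) If $X$ is $C$-upward, then $X$ and $Y$ are strictly separated. (2) If $X$ is $C$-downward, then $X$ and $Y$ are strictly separated.
   Context: A cone in $\mathbb{R}^n$ is a subset $C$ with $\lambda C\subseteq C$ for all $\lambda>0$ (possibly empty, need not contain $0$). $S$ is $C$-antichain-convex iff for all $x,y\in S$ and $\lambda\in[0,1]$ with $y-x\notin C\cup(-C)$ one has $\lambda x+(1-\lambda)y\in S$; $S$ is decomposably $C$-antichain-convex iff it is a Minkowski sum of finitely many $C$-antichain-convex sets. $S$ is $C$-upward iff $S+C\subseteq S$; $C$-downward iff $S-C\subseteq S$. $X$ and $Y$ are strictly separated iff there is a linear functional $f$ on $\mathbb{R}^n$ with $\sup f[X]<\inf f[Y]$. *)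

From HB Require Import structures.
From mathcomp Require Import all_boot all_order all_algebra.
From mathcomp Require Import all_classical all_reals all_analysis.
Set Implicit Arguments. Unset Strict Implicit. Unset Printing Implicit Defensive.
Import Order.TTheory GRing.Theory Num.Theory.
Import numFieldNormedType.Exports.
Local Open Scope classical_set_scope.
Local Open Scope ring_scope.

(* A cone: closed under multiplication by positive scalars (may be empty,
   need not contain 0). *)
Definition is_cone (R : realType) (n : nat) (C : set 'rV[R]_n) : Prop :=
  forall (l : R) (c : 'rV[R]_n), 0 < l -> C c -> C (l *: c).

Definition antichain_convex (R : realType) (n : nat)
    (C S : set 'rV[R]_n) : Prop :=
  forall (x y : 'rV[R]_n) (l : R), S x -> S y -> 0 <= l <= 1 ->
    ~ (C (y - x) \/ C (- (y - x))) ->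
    S (l *: x + (1 - l) *: y).

Definition minkowski_sum (R : realType) (n k : nat)
    (F : 'I_k -> set 'rV[R]_n) : set 'rV[R]_n :=
  [set x | exists p : 'I_k -> 'rV[R]_n,
             (forall i, F i (p i)) /\ x = \sum_(i < k) p i].

Definition decomp_antichain_convex (R : realType) (n : nat)
    (C S : set 'rV[R]_n) : Prop :=
  exists (k : nat) (F : 'I_k -> set 'rV[R]_n),
    (forall i, antichain_convex C (F i)) /\ S = minkowski_sum F.

Definition upward (R : realType) (n : nat) (C S : set 'rV[R]_n) : Prop :=
  forall x c, S x -> C c -> S (x + c).

Definition downward (R : realType) (n : nat) (C S : set 'rV[R]_n) : Prop :=
  forall x c, S x -> C c -> S (x - c).

Definition strictly_separated (R : realType) (n : nat)
    (X Y : set 'rV[R]_n) : Prop :=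
  exists f : {linear 'rV[R]_n -> R^o},
    (ereal_sup [set (f x)%:E | x in X] < ereal_inf [set (f y)%:E | y in Y])%E.

From HB Require Import structures.
From mathcomp Require Import all_boot all_order all_algebra.
From mathcomp Require Import all_classical all_reals all_analysis.
From mathcomp Require Import ring lra.

Set Implicit Arguments.
Unset Strict Implicit.
Unset Printing Implicit Defensive.
Import Order.TTheory GRing.Theory Num.Theory.
Import numFieldNormedType.Exports.
Local Open Scope classical_set_scope.
Local Open Scope ring_scope.

(* If X is C-upward, X - Y is convex. Indeed, a convex combination of two
   points of a C-antichain-convex set F lies in F + (C u {0}): either the two
   points are incomparable and the combination is in F, or it lies on a
   segment starting at one of them in a direction of C or -C. Summing over the
   summands of the decompositions, a convex combination of two points of X - Y
   is x - y + c with x in X, y in Y and c a sum of elements of C u {0}, and X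
   absorbs c because it is upward. Since X is closed and Y compact, X - Y has
   a point z0 of least Euclidean norm, nonzero by disjointness, and the
   first-order condition <z0, z - z0> >= 0 on the convex set X - Y shows that
   -<z0, .> separates X from Y with gap |z0|^2. The downward case is the
   upward case for the cone -C. *)

Lemma convex_combEr (K : pzRingType) (V : lmodType K) (l : K) (p q : V) :
  l *: p + (1 - l) *: q = q + l *: (p - q).
Proof.
by rewrite scalerBr scalerBl scale1r addrCA addrC -addrA [- _ + _]addrC.
Qed.

Lemma convex_combEl (K : pzRingType) (V : lmodType K) (l : K) (p q : V) :
  l *: p + (1 - l) *: q = p + (1 - l) *: (q - p).
Proof. by rewrite addrC -convex_combEr subKr. Qed.

Lemma first_order_coef_ge0 (R : realFieldType) (a b : R) :
  0 <= b ->
  (forall t, 0 < t <= 1 -> 0 <= 2 * t * a + t ^+ 2 * b) -> 0 <= a.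
Proof.
move=> b0 small_t; rewrite leNgt; apply/negP => a0.
pose t := - a / (b - a).
have tE : t * (b - a) = - a by rewrite mulfVK //; apply: lt0r_neq0; lra.
have t0 : 0 < t by rewrite divr_gt0 //; lra.
have t1 : t <= 1 by rewrite ler_pdivrMr; lra.
have := small_t t; rewrite t0 t1 expr2 => /(_ isT).
(* [t * b = (t - 1) * a], so the expression is [t * (1 + t) * a < 0]. *)
nra.
Qed.

Section Euclidean.
Variables (R : realType) (n : nat).
Implicit Types (u v : 'rV[R]_n) (X Y : set 'rV[R]_n).

Definition dot u v : R^o := \sum_j u ord0 j * v ord0 j.
Definition sqnorm v : R := dot v v.

Lemma dot_linear u : linear (dot u).
Proof.
move=> a v w; rewrite /dot scaler_sumr -big_split; apply: eq_bigr => j _.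
by rewrite !mxE /GRing.scale /=; ring.
Qed.

HB.instance Definition _ u :=
  GRing.isLinear.Build R 'rV[R]_n R^o *:%R (dot u) (dot_linear u).

Lemma dotNl u v : dot (- u) v = - dot u v.
Proof. by rewrite /dot -sumrN; apply: eq_bigr => j _; rewrite mxE mulNr. Qed.

Lemma sqnormDZ u v (t : R) :
  sqnorm (u + t *: v) = sqnorm u + 2 * t * dot u v + t ^+ 2 * sqnorm v.
Proof.
rewrite /sqnorm /dot !mulr_sumr -!big_split; apply: eq_bigr => j _.
by rewrite !mxE /=; ring.
Qed.

Lemma sqnorm_ge0 v : 0 <= sqnorm v.
Proof. by apply: sumr_ge0 => j _; rewrite -expr2 sqr_ge0. Qed.

Lemma sqnorm_gt0 v : v != 0 -> 0 < sqnorm v.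
Proof.
apply: contraNT; rewrite lt_def sqnorm_ge0 andbT negbK.
rewrite psumr_eq0 => [/allP v0|j _]; last by rewrite -expr2 sqr_ge0.
apply/eqP/matrixP => i j; rewrite (ord1 i) mxE.
by have /v0 := mem_index_enum j; rewrite mulf_eq0 orbb => /eqP.
Qed.

(* [`|v|] is the max norm of ['rV_n], while [sqnorm] is Euclidean. *)
Lemma normr_sqr_le_sqnorm v : `|v| ^+ 2 <= sqnorm v.
Proof.
change (mx_norm v ^+ 2 <= sqnorm v).
have [->|/mx_norm_neq0 [[i j] ->]] := eqVneq (mx_norm v) 0.
  by rewrite expr0n sqnorm_ge0.
rewrite (ord1 i) real_normK ?num_real // expr2 /sqnorm /dot (bigD1 j) //= lerDl.
by apply: sumr_ge0 => k _; rewrite -expr2 sqr_ge0.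
Qed.

Lemma sqnorm_gt v (m : R) : 0 <= m -> m + 1 < `|v| -> m < sqnorm v.
Proof. by have := normr_sqr_le_sqnorm v; rewrite expr2; nra. Qed.

Lemma sqnorm_continuous : continuous sqnorm.
Proof.
apply: (@continuous_big _ _ +%R 0 xpredT add_continuous) => j _ v.
by apply: continuousM; apply: coord_continuous.
Qed.

Lemma exists_min_sqnorm_sub X Y :
  X !=set0 -> Y !=set0 -> closed X -> closed Y -> [bounded y | y in Y] ->
  exists x0 y0, [/\ X x0, Y y0 &
    forall x y, X x -> Y y -> sqnorm (x0 - y0) <= sqnorm (x - y)].
Proof.
move=> [x1 Xx1] [y1 Yy1] cX cY bY; have [M [_ YM]] := bY.
have Yb y : Y y -> `|y| <= M + 1 by move=> Yy; apply: YM Yy; rewrite ltrDl.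
pose m := sqnorm (x1 - y1); have m0 : 0 <= m := sqnorm_ge0 _.
pose B := M + 1 + m + 1.
have far x y : Y y -> B < `|x| -> m < sqnorm (x - y).
  move=> Yy Bx; apply: sqnorm_gt m0 _.
  by have := lerB_dist x y; have := Yb _ Yy; rewrite /B in Bx; lra.
pose XB := X `&` closed_ball_ (@Num.norm _ _) 0 B.
have XBP x : X x -> `|x| <= B -> XB x.
  by move=> Xx xB; split; rewrite // /closed_ball_ /= sub0r normrN.
have cXB : compact XB.
  apply: bounded_closed_compact.
    exists B; split => [|B' BB' x [_]]; first by rewrite num_real.
    by rewrite /closed_ball_ /= sub0r normrN => /le_trans; apply; apply: ltW.
  by apply: closedI => //; apply: closed_closed_ball_.
have x1B : `|x1| <= B.
  by rewrite leNgt; apply/negP => /(far _ _ Yy1); rewrite ltxx.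
have dist_continuous :
    continuous (fun p : 'rV[R]_n * 'rV[R]_n => sqnorm (p.1 - p.2)).
  move=> p; apply: continuous_comp; first exact: sub_continuous.
  exact: sqnorm_continuous.
have [[x0 y0] /set_mem [[Xx0 _] Yy0] min0] := compact_EVT_min
  (ex_intro _ (x1, y1) (conj (XBP _ Xx1 x1B) Yy1) : (XB `*` Y) !=set0)
  (compact_setX cXB (bounded_closed_compact bY cY))
  (continuous_subspaceT dist_continuous).
exists x0, y0; split => // x y Xx Yy.
have [xB|/(far _ _ Yy) ltm] := leP `|x| B.
  by apply: (min0 (x, y)); rewrite inE; split => //; apply: XBP.
apply/ltW/le_lt_trans/ltm.
by apply: (min0 (x1, y1)); rewrite inE; split => //; apply: XBP.
Qed.

Lemma strictly_separated_gap (f : {linear 'rV[R]_n -> R^o}) (d : R) X Y :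
  0 < d -> X !=set0 -> Y !=set0 ->
  (forall x y, X x -> Y y -> f x + d <= f y) -> strictly_separated X Y.
Proof.
move=> d0 [x1 Xx1] [y1 Yy1] gap; exists f.
have sup_le y : Y y -> (ereal_sup [set (f x)%:E | x in X] <= (f y - d)%:E)%E.
  move=> Yy; apply: ge_ereal_sup => _ [x Xx <-]; rewrite lee_fin.
  by have := gap x y Xx Yy; lra.
have [r supE] : exists r, ereal_sup [set (f x)%:E | x in X] = r%:E.
  have : ((f x1)%:E <= ereal_sup [set (f x)%:E | x in X])%E.
    by apply: ereal_sup_ubound; exists x1.
  move: (sup_le _ Yy1).
  by case: (ereal_sup _) => [r| |] //; exists r.
rewrite supE; apply: (@lt_le_trans _ _ (r + d)%:E).
  by rewrite lte_fin; lra.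
apply: le_ereal_inf_tmp => _ [y Yy <-]; rewrite lee_fin.
by have := sup_le y Yy; rewrite supE lee_fin; lra.
Qed.

Definition is_convex (Z : set 'rV[R]_n) : Prop :=
  forall z z' (l : R), Z z -> Z z' -> 0 <= l <= 1 -> Z (l *: z + (1 - l) *: z').

Lemma convex_min_sqnorm_dot Z z0 : is_convex Z -> Z z0 ->
  (forall z, Z z -> sqnorm z0 <= sqnorm z) ->
  forall z, Z z -> sqnorm z0 <= dot z0 z.
Proof.
move=> cZ Zz0 min0 z Zz.
suff : 0 <= dot z0 (z - z0) by rewrite linearB subr_ge0.
apply: (first_order_coef_ge0 (sqnorm_ge0 (z - z0))) => t /andP[t0 t1].
have := min0 _ (cZ _ _ t Zz Zz0 (introT andP (conj (ltW t0) t1))).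
by rewrite convex_combEr sqnormDZ -addrA lerDl.
Qed.

Theorem strictly_separated_convex_sub X Y :
  X !=set0 -> Y !=set0 -> closed X -> closed Y -> [bounded y | y in Y] ->
  X `&` Y = set0 -> is_convex [set x - y | x in X & y in Y] ->
  strictly_separated X Y.
Proof.
move=> X0 Y0 cX cY bY XY0 cZ.
have [x0 [y0 [Xx0 Yy0 min0]]] := exists_min_sqnorm_sub X0 Y0 cX cY bY.
pose z0 := x0 - y0.
have z0_gt0 : 0 < sqnorm z0.
  apply: sqnorm_gt0; rewrite subr_eq0; apply/eqP => x0E.
  have : (X `&` Y) x0 by split; last rewrite x0E.
  by rewrite XY0.
have dot_ge x y : X x -> Y y -> sqnorm z0 <= dot z0 (x - y).
  move=> Xx Yy; apply: (convex_min_sqnorm_dot cZ) => [|_ [x' Xx' [y' Yy' <-]]|].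
  - by exists x0 => //; exists y0.
  - exact: min0.
  - by exists x => //; exists y.
apply: (@strictly_separated_gap (dot (- z0)) _ _ _ z0_gt0 X0 Y0) => x y Xx Yy.
by have := dot_ge x y Xx Yy; rewrite /= !dotNl linearB /=; lra.
Qed.

End Euclidean.

Section DecomposablyAntichainConvex.
Variables (R : realType) (n : nat).
Implicit Types (C F S T X Y : set 'rV[R]_n).

Definition opp_cone C := [set c | C (- c)].

Lemma is_cone_opp C : is_cone C -> is_cone (opp_cone C).
Proof. by move=> hC l c l0 Cc; rewrite /opp_cone /= -scalerN; apply: hC. Qed.

Lemma antichain_convex_opp C S :
  antichain_convex C S -> antichain_convex (opp_cone C) S.
Proof.
move=> hS x y l Sx Sy hl incomparable; apply: hS => // comparable.
by apply: incomparable; rewrite /opp_cone /= opprK or_comm.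
Qed.

Lemma decomp_antichain_convex_opp C S :
  decomp_antichain_convex C S -> decomp_antichain_convex (opp_cone C) S.
Proof.
move=> [k [F [hF ->]]]; exists k, F; split => // i.
exact: antichain_convex_opp.
Qed.

Lemma downward_upward_opp C S : downward C S -> upward (opp_cone C) S.
Proof. by move=> hS x c Sx Cc; rewrite -[c]opprK; apply: hS. Qed.

Lemma cone0_scale C (t : R) c :
  is_cone C -> 0 <= t -> C c -> (C `|` [set 0]) (t *: c).
Proof.
move=> hC t0 Cc; have [->|t_neq0] := eqVneq t 0.
  by right; rewrite scale0r.
by left; apply: hC => //; rewrite lt_def t_neq0 t0.
Qed.

Lemma antichain_convex_comb C F p q (l : R) :
  is_cone C -> antichain_convex C F -> F p -> F q -> 0 <= l <= 1 ->
  exists2 r, F r & (C `|` [set 0]) (l *: p + (1 - l) *: q - r).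
Proof.
move=> hC hF Fp Fq /andP[l0 l1].
have [[Cqp|Cpq]|incomparable] := pselect (C (q - p) \/ C (- (q - p))).
- exists p; rewrite // convex_combEl addrC addKr.
  by apply: cone0_scale; rewrite // subr_ge0.
- exists q; rewrite // convex_combEr addrC addKr.
  by apply: cone0_scale => //; rewrite -opprB.
- exists (l *: p + (1 - l) *: q); last by rewrite subrr; right.
  by apply: hF; rewrite ?l0.
Qed.

Lemma upward_addr_sum C T k (c : 'I_k -> 'rV[R]_n) x : upward C T ->
  (forall i, (C `|` [set 0]) (c i)) -> T x -> T (x + \sum_i c i).
Proof.
move=> hT hc; elim/big_ind: _ x => [x|a b Ha Hb x Tx|i _ x Tx].
- by rewrite addr0.
- by rewrite addrA; apply/Hb/Ha.
- by case: (hc i) => [Cc|->]; [apply: hT | rewrite addr0].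
Qed.

Lemma decomp_antichain_convex_comb C S T x x' (l : R) :
  is_cone C -> decomp_antichain_convex C S -> upward C T -> S `<=` T ->
  S x -> S x' -> 0 <= l <= 1 -> T (l *: x + (1 - l) *: x').
Proof.
move=> hC [k [F [hF ->]]] hT ST [p [Fp ->]] [p' [Fp' ->]] hl.
pose w i := l *: p i + (1 - l) *: p' i.
have /choice [r Fr] : forall i, exists r, F i r /\ (C `|` [set 0]) (w i - r).
  move=> i; have [r] := antichain_convex_comb hC (hF i) (Fp i) (Fp' i) hl.
  by exists r.
have -> : l *: \sum_i p i + (1 - l) *: \sum_i p' i =
          \sum_i r i + \sum_i (w i - r i).
  by rewrite !scaler_sumr -!big_split; apply: eq_bigr => i _ /=; rewrite subrKC.
apply: upward_addr_sum hT _ _; first by move=> i; case: (Fr i).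
by apply: ST; exists r; split => // i; case: (Fr i).
Qed.

Lemma upward_decomp_convex_sub C X Y : is_cone C -> upward C X ->
  decomp_antichain_convex C X -> decomp_antichain_convex C Y ->
  is_convex [set x - y | x in X & y in Y].
Proof.
move=> hC hX dX dY _ _ l [x Xx [y Yy <-]] [x' Xx' [y' Yy' <-]] hl.
pose a := l *: x + (1 - l) *: x'; pose b := l *: y + (1 - l) *: y'.
have Xa : X a by apply: (decomp_antichain_convex_comb hC dX hX).
(* [b] is a point of [Y] minus an element of the cone, which [X] absorbs. *)
pose T := [set w | exists2 s, Y s & X (a + s - w)].
have [s Ys Xb] : T b.
  apply: (decomp_antichain_convex_comb (is_cone_opp hC)
           (decomp_antichain_convex_opp dY)) => //.
    by move=> w c [s Ys Xw] Cc; exists s; rewrite // opprD addrA; apply: hX.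
  by move=> w Yw; exists w; rewrite ?addrK.
exists (a + s - b) => //; exists s => //.
by rewrite addrAC addrK !scalerBr addrACA opprD.
Qed.

End DecomposablyAntichainConvex.

Theorem corollary3 (R : realType) (n : nat) (C X Y : set 'rV[R]_n) :
  is_cone C ->
  X !=set0 -> Y !=set0 ->
  closed X -> closed Y ->
  decomp_antichain_convex C X -> decomp_antichain_convex C Y ->
  [bounded y | y in Y] ->
  X `&` Y = set0 ->
  (upward C X -> strictly_separated X Y) /\
  (downward C X -> strictly_separated X Y).
Proof.
move=> hC X0 Y0 cX cY dX dY bY XY0; split => hX.
  exact/strictly_separated_convex_sub/(upward_decomp_convex_sub hC hX dX dY).
apply: strictly_separated_convex_sub => //.
apply: (upward_decomp_convex_sub (is_cone_opp hC)).
- exact: downward_upward_opp.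
- exact: decomp_antichain_convex_opp.
- exact: decomp_antichain_convex_opp.
Qed.
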